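(* For every $u\in\mathcal{N}_\lambda^+$, $$J_\lambda(u)\le-\frac{(q-p)(p+\alpha-1)}{qp(1-\alpha)}\big(a\|u\|^p+\|u\|_p^p\big)-b\,\frac{(q-p\theta)(p\theta+\alpha-1)}{qp\theta(1-\alpha)}\|u\|^{p\theta}<0.$$
   Context: Let $s\in(0,1)$, $p>1$, $n>ps$, $p_s^*=\frac{np}{n-ps}$, $\Omega\subset\mathbb{R}^n$ a bounded smooth domain, $a,b>0$, $\theta>1$, $\alpha\in(0,1)$, $c\in L^\infty(\Omega)$, $c\ge0$, $\lambda>0$, and $1<p<p\theta<q\le p_s^*$. $X_0$ is the space of measurable $u$ on $\mathbb{R}^n$ vanishing a.e. outside $\Omega$ with $\|u\|:=\big(\int_{\mathbb{R}^{2n}}\frac{|u(x)-u(y)|^p}{|x-y|^{n+ps}}dxdy\big)^{1/p}<\infty$; $\|u\|_r$ is the $L^r(\Omega)$ norm; $u^+=\max\{u,0\}$. $f$ is homogeneous of order $q-1$ in the second variable, $F(x,t)=\int_0^tf(x,\tau)d\tau$, $qF=tf$. $J_\lambda(u)=\frac1p(a\|u\|^p+\|u\|_p^p)+\frac b{p\theta}\|u\|^{p\theta}-\frac1{1-\alpha}\int_\Omega c(u^+)^{1-\alpha}-\lambda\int_\Omega F(x,u^+)$. For $u\in X_0$ set $\varphi_u'(1)=a\|u\|^p+\|u\|_p^p+b\|u\|^{p\theta}-\int_\Omega c(u^+)^{1-\alpha}-\lambda q\int_\Omega F(x,u^+)$ and $\varphi_u''(1)=(p-1)(a\|u\|^p+\|u\|_p^p)+b(p\theta-1)\|u\|^{p\theta}+\alpha\int_\Omega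 c(u^+)^{1-\alpha}-\lambda q(q-1)\int_\Omega F(x,u^+)$; $\mathcal{N}_\lambda^+=\{u\in X_0:\varphi_u'(1)=0,\ \varphi_u''(1)>0\}$. *)

From HB Require Import structures.
From mathcomp Require Import all_boot all_order all_algebra.
From mathcomp Require Import all_classical all_reals all_analysis.

Set Implicit Arguments.
Unset Strict Implicit.
Unset Printing Implicit Defensive.
Import Order.TTheory GRing.Theory Num.Theory.
Import numFieldNormedType.Exports.

Local Open Scope classical_set_scope.
Local Open Scope ring_scope.

Section Defs.
Variable R : realType.

(** MathComp-Analysis has no Lebesgue measure on R^n, so the integral of a
    NONNEGATIVE function over R^n is defined as the iterated Lebesgue
    integral over R (equal to the Lebesgue integral on R^n by Tonelli). *)
Fixpoint iterint (n : nat) (g : (nat -> R) -> \bar R) : \bar R :=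
  match n with
  | 0 => g (fun _ => 0)
  | m.+1 => (\int[lebesgue_measure]_(t in [set: R])
               iterint m (fun s => g (fun i => if i is j.+1 then s j else t)))%E
  end.

Definition rowof (n : nat) (s : nat -> R) : 'rV[R]_n := \row_(i < n) s i.

Definition lebint (n : nat) (g : 'rV[R]_n -> \bar R) : \bar R :=
  iterint n (fun s => g (rowof n s)).

Definition lebint2 (n : nat) (g : 'rV[R]_n -> 'rV[R]_n -> \bar R) : \bar R :=
  lebint (fun x => lebint (fun y => g x y)).

Definition Rint_on (n : nat) (Om : set 'rV[R]_n) (g : 'rV[R]_n -> R) : R :=
  fine (lebint (fun x => (Num.max (g x) 0 * \1_Om x)%:E))
  - fine (lebint (fun x => (Num.max (- g x) 0 * \1_Om x)%:E)).

Definition enorm (n : nat) (x : 'rV[R]_n) : R :=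
  Num.sqrt (\sum_(i < n) x ord0 i ^+ 2).

Definition measurable_Rn (n : nat) (u : 'rV[R]_n -> R) : Prop :=
  measurable_fun [set: n.-tuple R] (fun t : n.-tuple R => u (\row_(i < n) tnth t i)).

Definition gagliardo_int (n : nat) (s p : R) (u : 'rV[R]_n -> R) : \bar R :=
  lebint2 (fun x y =>
    ((`|u x - u y| `^ p) / (enorm (x - y) `^ (n%:R + p * s)))%:E).

Definition X0norm (n : nat) (s p : R) (u : 'rV[R]_n -> R) : R :=
  fine (gagliardo_int s p u) `^ p^-1.

Definition Lnorm_on (n : nat) (Om : set 'rV[R]_n) (r : R) (u : 'rV[R]_n -> R) : R :=
  fine (lebint (fun x => (`|u x| `^ r * \1_Om x)%:E)) `^ r^-1.

Definition in_X0 (n : nat) (s p : R) (Om : set 'rV[R]_n) (u : 'rV[R]_n -> R) : Prop :=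
  [/\ measurable_Rn u,
      lebint (fun x => (\1_(~` Om) x * (u x != 0)%:R)%:E) = 0%E
    & (gagliardo_int s p u < +oo)%E].

Fixpoint iterD (m : nat) (vs : seq 'rV[R]_m) (h : 'rV[R]_m -> R) : 'rV[R]_m -> R :=
  match vs with
  | [::] => h
  | v :: vs' => 'D_v (iterD vs' h)
  end.

Definition smooth_fun (m : nat) (h : 'rV[R]_m -> R) : Prop :=
  forall vs : seq 'rV[R]_m,
    continuous (iterD vs h) /\ forall (a v : 'rV[R]_m), derivable (iterD vs h) a v.

Definition bounded_smooth_domain (n : nat) (Om : set 'rV[R]_n) : Prop :=
  [/\ open Om, connected Om, Om !=set0,
      (exists M : R, forall x, Om x -> `|x| <= M)
    & forall x0, (closure Om `\` Om) x0 ->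
        exists r : R, 0 < r /\
        exists phi : 'rV[R]_n -> R, smooth_fun phi /\
          (exists v : 'rV[R]_n, 'D_v phi x0 != 0) /\
          forall x, ball x0 r x -> (Om x <-> phi x < 0)].

Definition homogeneous2 (n : nat) (Om : set 'rV[R]_n) (q : R)
    (f : 'rV[R]_n -> R -> R) : Prop :=
  forall x, Om x -> forall (k t : R), 0 < k -> f x (k * t) = k `^ (q - 1) * f x t.

Definition Fprim (n : nat) (f : 'rV[R]_n -> R -> R) (x : 'rV[R]_n) (t : R) : R :=
  if 0 <= t then Rintegral lebesgue_measure `[0, t] (f x)
  else - Rintegral lebesgue_measure `[t, 0] (f x).

Definition posp (r : R) : R := Num.max r 0.

Section Functional.
Variables (n : nat) (s p : R) (Om : set 'rV[R]_n) (a b theta alpha : R)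
  (c : 'rV[R]_n -> R) (lambda q : R) (f : 'rV[R]_n -> R -> R).

Definition Aterm (u : 'rV[R]_n -> R) : R :=
  a * X0norm s p u `^ p + Lnorm_on Om p u `^ p.

Definition Cterm (u : 'rV[R]_n -> R) : R :=
  Rint_on Om (fun x => c x * posp (u x) `^ (1 - alpha)).

Definition Fterm (u : 'rV[R]_n -> R) : R :=
  Rint_on Om (fun x => Fprim f x (posp (u x))).

Definition J_lambda (u : 'rV[R]_n -> R) : R :=
  p^-1 * Aterm u + b / (p * theta) * X0norm s p u `^ (p * theta)
  - (1 - alpha)^-1 * Cterm u - lambda * Fterm u.

Definition phi1 (u : 'rV[R]_n -> R) : R :=
  Aterm u + b * X0norm s p u `^ (p * theta) - Cterm u - lambda * q * Fterm u.

Definition phi2 (u : 'rV[R]_n -> R) : R :=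
  (p - 1) * Aterm u + b * (p * theta - 1) * X0norm s p u `^ (p * theta)
  + alpha * Cterm u - lambda * q * (q - 1) * Fterm u.

Definition Nplus (u : 'rV[R]_n -> R) : Prop :=
  [/\ in_X0 s p Om u, phi1 u = 0 & 0 < phi2 u].

End Functional.
End Defs.

From HB Require Import structures.
From mathcomp Require Import all_boot all_order all_algebra.
From mathcomp Require Import all_classical all_reals all_analysis.
From mathcomp Require Import measurable_realfun ring lra.
Set Implicit Arguments.
Unset Strict Implicit.
Unset Printing Implicit Defensive.
Import Order.TTheory GRing.Theory Num.Theory.
Import numFieldNormedType.Exports.
Local Open Scope classical_set_scope.
Local Open Scope ring_scope.

(* On the Nehari set phi_u'(1) = 0, so eliminating the F-term gives
   J_lambda(u) - bound = - (phi_u''(1) - (q - 1) phi_u'(1)) / (q (1 - alpha)),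
   which is negative.  The bound is a combination with nonpositive
   coefficients of a ||u||^p + ||u||_p^p and ||u||^(p theta), hence negative as
   soon as ||u|| <> 0.  If ||u|| = 0, the Gagliardo integral vanishes, so
   u(x) = u(y) for almost every pair (x, y); as u vanishes a.e. outside the
   bounded set Omega, u = 0 a.e., hence the singular term int c (u^+)^(1-alpha)
   vanishes, and then phi_u'(1) = 0 < phi_u''(1) is impossible. *)

(* Unlike the library versions, no measurability is assumed: the integrands
   below involve the indicator of Omega, which is not known to be measurable. *)
Section NonnegIntegral.
Context (R : realType) d (T : measurableType d) (nu : {measure set T -> \bar R}).
Import HBNNSimple.

Lemma ge0_le_integralT (f1 f2 : T -> \bar R) :
  (forall x, 0 <= f1 x)%E -> (forall x, f1 x <= f2 x)%E ->
  (\int[nu]_x f1 x <= \int[nu]_x f2 x)%E.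
Proof.
move=> f10 f12; have f20 x : (0 <= f2 x)%E by apply: le_trans (f12 x).
rewrite !ge0_integralTE //; apply: le_ereal_sup => _ [h hf <-]; exists h => //.
by move=> x; exact: le_trans (hf x) (f12 x).
Qed.

Lemma ge0_integral_ae_eq0 (f : T -> \bar R) :
  (forall x, 0 <= f x)%E -> {ae nu, forall x, f x = 0%E} -> (\int[nu]_x f x = 0)%E.
Proof.
move=> f0 [N [mN N0 fN]]; apply/eqP; rewrite eq_le integral_ge0 // andbT.
rewrite ge0_integralTE //; apply: ge_ereal_sup => _ [h hf <-].
have := @integral_nnsfun _ _ _ nu setT measurableT h.
rewrite patch_setT => <-.
rewrite (ge0_negligible_integral _ _ _ _ N0) //.
- rewrite integral0_eq // => x [_ Nx]; apply/eqP; rewrite eq_le.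
  apply/andP; split; last by rewrite lee_fin fun_ge0.
  by rewrite -(_ : f x = 0%E) ?hf //; apply: contrapT => /fN.
- by apply/measurable_EFinP; exact: measurable_funPT.
- by move=> x _; rewrite lee_fin fun_ge0.
Qed.

End NonnegIntegral.

Section IteratedIntegral.
Variable R : realType.
Local Notation mu := (@lebesgue_measure R).

Definition scons (t : R) (v : nat -> R) : nat -> R :=
  fun i => if i is j.+1 then v j else t.

Definition tup (m : nat) (v : nat -> R) : m.-tuple R := [tuple v i | i < m].

Lemma tnth_tup m v (i : 'I_m) : tnth (tup m v) i = v i.
Proof. exact: tnth_mktuple. Qed.

Lemma tup_scons m t v : tup m.+1 (scons t v) = [tuple of t :: tup m v].
Proof.
apply: eq_from_tnth => -[[|i] im]; rewrite tnth_tup //=.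
have im' : (i < m)%N by [].
by rewrite (tnth_nth 0) /= -[nth 0 _ i]/(nth 0 (tup m v) (Ordinal im')) -tnth_nth tnth_tup.
Qed.

Lemma iterint_ge0 m (g : (nat -> R) -> \bar R) :
  (forall v, 0 <= g v)%E -> (0 <= iterint m g)%E.
Proof.
elim: m g => [|m IH] g g0 //=.
by apply: integral_ge0 => t _; apply: IH.
Qed.

Lemma le_iterint m (g1 g2 : (nat -> R) -> \bar R) :
  (forall v, 0 <= g1 v)%E -> (forall v, g1 v <= g2 v)%E ->
  (iterint m g1 <= iterint m g2)%E.
Proof.
elim: m g1 g2 => [|m IH] g1 g2 g10 g12 //=.
apply: ge0_le_integralT => t; first exact: iterint_ge0.
exact: IH.
Qed.

Lemma measurable_iterint m d (T : measurableType d) (K : T * m.-tuple R -> \bar R) :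
  measurable_fun setT K -> (forall z, 0 <= K z)%E ->
  measurable_fun setT (fun x => iterint m (fun v => K (x, tup m v))).
Proof.
elim: m d T K => [|m IH] d T K mK K0 /=.
  by apply: measurableT_comp mK _; apply: measurable_fun_pair => //; exact: measurable_cst.
pose K' (z : (T * R) * m.-tuple R) := K (z.1.1, [tuple of z.1.2 :: z.2]).
have mK' : measurable_fun setT K'.
  apply: measurableT_comp mK _; apply: measurable_fun_pair; first exact: measurableT_comp.
  by apply: measurable_cons => //; exact: measurableT_comp.
pose F z := iterint m (fun v => K' (z, tup m v)).
have F0 z : (0 <= F z)%E by apply: iterint_ge0 => v; exact: K0.
have := @measurable_fun_fubini_tonelli_F _ _ T _ R mu F (IH _ _ K' mK' (fun z => K0 _)) F0.
apply: eq_measurable_fun => x _; apply: eq_integral => t _; rewrite /F /K' /=; congr iterint.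
by apply: funext => v; rewrite tup_scons.
Qed.

Fixpoint iter_ae (m : nat) (P : (nat -> R) -> Prop) : Prop :=
  match m with
  | 0 => P (fun _ => 0)
  | m.+1 => {ae mu, forall t, iter_ae m (fun v => P (scons t v))}
  end.

Lemma iter_aeS m (P Q : (nat -> R) -> Prop) :
  (forall v, P v -> Q v) -> iter_ae m P -> iter_ae m Q.
Proof.
elim: m P Q => [|m IH] P Q PQ /=; first exact: PQ.
by apply: (filterS (F := almost_everywhere mu)) => t; apply: IH => v; apply: PQ.
Qed.

Lemma iter_aeI m (P Q : (nat -> R) -> Prop) :
  iter_ae m P -> iter_ae m Q -> iter_ae m (fun v => P v /\ Q v).
Proof.
elim: m P Q => [|m IH] P Q /=; first by split.
by apply: (filterS2 (F := almost_everywhere mu)) => t; apply: IH.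
Qed.

Lemma iterint_ae_eq0 m (g : (nat -> R) -> \bar R) :
  (forall v, 0 <= g v)%E -> iter_ae m (fun v => g v = 0%E) -> iterint m g = 0%E.
Proof.
elim: m g => [|m IH] g g0 //= gae.
apply: ge0_integral_ae_eq0 => [t|]; first exact: iterint_ge0.
by apply: (filterS (F := almost_everywhere mu)) gae => t; apply: IH.
Qed.

Lemma iterint_eq0_ae m (K : m.-tuple R -> \bar R) :
  measurable_fun setT K -> (forall w, 0 <= K w)%E ->
  iterint m (fun v => K (tup m v)) = 0%E -> iter_ae m (fun v => K (tup m v) = 0%E).
Proof.
elim: m K => [|m IH] K mK K0 //= IK0.
pose F t := iterint m (fun v => K [tuple of t :: tup m v]).
have mF : measurable_fun setT F.
  apply: (@measurable_iterint m _ R (fun z => K [tuple of z.1 :: z.2])) => [|z].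
    by apply: measurableT_comp mK _; exact: measurable_cons.
  exact: K0.
have F0 t : (0 <= F t)%E by apply: iterint_ge0.
have : (\int[mu]_(t in [set: R]) `|F t| = 0)%E.
  rewrite -[RHS]IK0; apply: eq_integral => t _; rewrite gee0_abs //.
  by congr iterint; apply: funext => v; rewrite tup_scons.
move/(ae_eq_integral_abs mu measurableT mF).
apply: (filterS (F := almost_everywhere mu)) => t /(_ I) Ft0.
have mKt : measurable_fun setT (fun w : m.-tuple R => K [tuple of (t : R) :: w]).
  by apply: measurableT_comp mK _; exact: measurable_cons.
by apply: iter_aeS (IH _ mKt (fun w => K0 _) Ft0) => v; rewrite tup_scons.
Qed.

Lemma ae_exists_gt (M : R) (Q : R -> Prop) :
  {ae mu, forall t, Q t} -> exists t, M < t /\ Q t.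
Proof.
move=> [N [mN N0 QN]]; apply: contrapT => noQ.
suff : mu [set` `]M, +oo[] = 0%E by rewrite lebesgue_measure_itv /= ltry.
apply: (subset_measure0 _ mN _ N0); first exact: measurable_itv.
move=> t.
rewrite /= in_itv /= andbT => Mt; apply: QN => Qt.
by apply: noQ; exists t.
Qed.

Lemma iter_ae_exists_gt m (P : (nat -> R) -> Prop) (M : R) :
  iter_ae m P -> exists v, P v /\ forall i, (i < m)%N -> M < v i.
Proof.
elim: m P => [|m IH] P /=; first by exists (fun _ => 0).
move=> /(ae_exists_gt M) [t [Mt /IH [v [Pv Mv]]]].
by exists (scons t v); split => // -[|i] //= /Mv.
Qed.

End IteratedIntegral.

Section GagliardoKernel.
Variables (R : realType) (n : nat).

Definition rowt (w : n.-tuple R) : 'rV[R]_n := \row_(i < n) tnth w i.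

Lemma rowt_tup v : rowt (tup n v) = rowof n v.
Proof. by apply/rowP => i; rewrite !mxE tnth_tup. Qed.

Lemma mx_norm_ge_coef (x : 'rV[R]_n) (i : 'I_n) : `|x ord0 i| <= `|x|.
Proof.
rewrite [leRHS]/Num.Def.normr /= mx_normrE.
exact: (le_bigmax _ (fun ij : 'I_1 * 'I_n => `|x ij.1 ij.2|) (ord0, i)).
Qed.

Lemma enorm_gt0 (z : 'rV[R]_n) : z != 0 -> 0 < enorm z.
Proof.
move=> z0; rewrite /enorm sqrtr_gt0.
have [i zi] : exists i, z ord0 i != 0.
  apply/existsP; apply: contraNT z0 => /existsPn zi0; apply/eqP/rowP => i.
  by rewrite mxE; apply/eqP; move: (zi0 i); rewrite negbK.
rewrite (bigD1 i) //= ltr_wpDr ?sumr_ge0 // => [j _|]; first exact: sqr_ge0.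
by rewrite exprn_even_gt0 ?zi.
Qed.

Lemma measurable_enorm_rowt_sub :
  measurable_fun setT (fun z : n.-tuple R * n.-tuple R => enorm (rowt z.1 - rowt z.2)).
Proof.
apply: measurableT_comp; first exact: (continuous_measurable_fun (@sqrt_continuous R)).
apply: measurable_sum => i.
apply: (eq_measurable_fun (fun z : n.-tuple R * n.-tuple R => (tnth z.1 i - tnth z.2 i) ^+ 2)).
  by move=> z _; rewrite !mxE.
apply/measurable_funX/measurable_funB.
  exact: measurableT_comp (measurable_tnth i) measurable_fst.
exact: measurableT_comp (measurable_tnth i) measurable_snd.
Qed.

Variables (s p : R) (u : 'rV[R]_n -> R).

Definition gagliardo_kernel (z : n.-tuple R * n.-tuple R) : \bar R :=
  ((`|u (rowt z.1) - u (rowt z.2)| `^ p)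
   / (enorm (rowt z.1 - rowt z.2) `^ (n%:R + p * s)))%:E.

Lemma gagliardo_kernel_ge0 z : (0 <= gagliardo_kernel z)%E.
Proof. by rewrite lee_fin divr_ge0 // powR_ge0. Qed.

Lemma measurable_gagliardo_kernel :
  measurable_Rn u -> measurable_fun setT gagliardo_kernel.
Proof.
move=> u_meas; apply/measurable_EFinP.
apply: (eq_measurable_fun (fun z => (`|u (rowt z.1) - u (rowt z.2)| `^ p)
   * (enorm (rowt z.1 - rowt z.2) `^ (- (n%:R + p * s))))).
  by move=> z _; rewrite powRN.
apply: measurable_funM.
  apply: measurableT_comp (measurable_powR p) _.
  apply: measurableT_comp (@normr_measurable R setT) _.
  by apply: measurable_funB; apply: measurableT_comp u_meas _.
exact: measurableT_comp (measurable_powR _) measurable_enorm_rowt_sub.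
Qed.

Lemma gagliardo_intE : gagliardo_int s p u
  = iterint n (fun v => iterint n (fun v' => gagliardo_kernel (tup n v, tup n v'))).
Proof.
rewrite /gagliardo_int /lebint2 /lebint.
apply: (congr1 (iterint n)); apply: funext => v.
apply: (congr1 (iterint n)); apply: funext => v'.
by rewrite /gagliardo_kernel /= !rowt_tup.
Qed.

Lemma gagliardo_kernel_eq0 w w' :
  gagliardo_kernel (w, w') = 0%E -> rowt w != rowt w' -> u (rowt w) = u (rowt w').
Proof.
move=> [] /eqP K0 ww'.
have d_gt0 : 0 < enorm (rowt w - rowt w') `^ (n%:R + p * s).
  by apply/powR_gt0/enorm_gt0; rewrite subr_eq0.
move: K0; rewrite mulf_eq0 invr_eq0 (gt_eqF d_gt0) orbF powR_eq0 normr_eq0 subr_eq0.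
by case/andP => /eqP.
Qed.

Lemma gagliardo_int_eq0_ae : measurable_Rn u -> gagliardo_int s p u = 0%E ->
  iter_ae n (fun v => iter_ae n (fun v' => gagliardo_kernel (tup n v, tup n v') = 0%E)).
Proof.
move=> u_meas G0; have mK := measurable_gagliardo_kernel u_meas.
have mKout := measurable_iterint mK gagliardo_kernel_ge0.
have Kout_ge0 w : (0 <= iterint n (fun v' => gagliardo_kernel (w, tup n v')))%E.
  by apply: iterint_ge0 => v'; exact: gagliardo_kernel_ge0.
apply: iter_aeS (iterint_eq0_ae mKout Kout_ge0 _) => [v Kv|]; last by rewrite -gagliardo_intE.
have mKv : measurable_fun setT (fun w => gagliardo_kernel (tup n v, w)).
  by apply: measurableT_comp mK _; apply: measurable_fun_pair => //; exact: measurable_cst.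
exact: iterint_eq0_ae mKv (fun w => gagliardo_kernel_ge0 _) Kv.
Qed.

Lemma X0norm_eq0 (Om : set 'rV[R]_n) :
  in_X0 s p Om u -> X0norm s p u = 0 -> gagliardo_int s p u = 0%E.
Proof.
move=> [_ _ G_fin] /eqP; rewrite powR_eq0 => /andP[/eqP G0 _].
have G_ge0 : (0 <= gagliardo_int s p u)%E.
  by rewrite gagliardo_intE; apply: iterint_ge0 => v; apply: iterint_ge0 => v';
    exact: gagliardo_kernel_ge0.
by rewrite -(@fineK _ (gagliardo_int s p u)) ?G0 // ge0_fin_numE.
Qed.

End GagliardoKernel.

Section VanishingOnOmega.
Variables (R : realType) (n : nat) (Om : set 'rV[R]_n).

Lemma measurable_tuple_gt (M : R) :
  measurable [set w : n.-tuple R | forall i, M < tnth w i].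
Proof.
rewrite [X in measurable X](_ : _ =
    \bigcap_(i in [set: 'I_n]) ((@tnth n R)^~ i @^-1` [set` `]M, +oo[])); last first.
  apply/seteqP; split => w /= Mw i; last by have := Mw i I; rewrite /= in_itv /= andbT.
  by move=> _; rewrite /= in_itv /= andbT.
apply: fin_bigcap_measurable => [|i _]; first exact: finite_finset.
by have := measurable_tnth i measurableT (measurable_itv `]M, +oo[); rewrite setTI.
Qed.

Lemma far_ae_eq0 (M : R) (u : 'rV[R]_n -> R) :
  (0 < n)%N -> (forall x, Om x -> `|x| <= M) -> measurable_Rn u ->
  lebint (fun x => (\1_(~` Om) x * (u x != 0)%:R)%:E) = 0%E ->
  iter_ae n (fun v => (forall i, (i < n)%N -> M < v i) -> u (rowof n v) = 0).
Proof.
move=> n_gt0 OmM u_meas out0.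
pose S := [set w : n.-tuple R | forall i, M < tnth w i] `&` [set w | u (rowt w) <> 0].
have mS : measurable S.
  apply: measurableI; first exact: measurable_tuple_gt.
  by have := u_meas measurableT _ (measurableC (measurable_set1 0)); rewrite setTI.
have mK : measurable_fun setT (fun w => (\1_S w)%:E : \bar R).
  by apply/measurable_EFinP; exact: measurable_indic.
have K_ge0 w : (0 <= (\1_S w)%:E :> \bar R)%E by rewrite lee_fin indicE.
have S_out v : S (tup n v) -> ~ Om (rowof n v) /\ u (rowof n v) <> 0.
  rewrite /S /= rowt_tup => -[Mv uv]; split => // /OmM; apply/negP; rewrite -ltNge.
  pose i0 : 'I_n := Ordinal n_gt0.
  have := mx_norm_ge_coef (rowof n v) i0; rewrite mxE; apply: lt_le_trans.
  by apply: lt_le_trans (Mv i0) _; rewrite tnth_tup ler_norm.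
have : iterint n (fun v => (\1_S (tup n v))%:E) = 0%E.
  apply/eqP; rewrite eq_le iterint_ge0 ?andbT //.
  rewrite -out0; apply: le_iterint => // v; rewrite lee_fin indicE.
  case: (boolP (_ \in _)) => [/set_mem /S_out [Om_v uv] | _]; last first.
    by rewrite mulr_ge0 // indicE.
  by rewrite indicE mem_set //; move/eqP: uv => ->; rewrite mulr1.
move/(iterint_eq0_ae mK K_ge0); apply: iter_aeS => v Sv0 Mv.
apply: contrapT => uv.
have Sv : S (tup n v).
  by split => [i|] /=; rewrite ?tnth_tup ?rowt_tup //; apply: (Mv i (ltn_ord i)).
by move: Sv0; rewrite indicE mem_set // => -[] /eqP; rewrite oner_eq0.
Qed.

Lemma Rint_on_ae_eq0 (g : 'rV[R]_n -> R) :
  iter_ae n (fun v => g (rowof n v) = 0) -> Rint_on Om g = 0.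
Proof.
move=> g0.
have part0 (h : R -> R) : h 0 = 0 ->
    lebint (fun x => (Num.max (h (g x)) 0 * \1_Om x)%:E) = 0%E.
  move=> h0; apply: iterint_ae_eq0 => [v|].
    by rewrite lee_fin mulr_ge0 ?le_max ?lexx ?orbT // indicE.
  by apply: iter_aeS g0 => v ->; rewrite h0 maxxx mul0r.
by rewrite /Rint_on (part0 id) // (part0 -%R) ?oppr0 // addr0.
Qed.

Lemma gagliardo_int_eq0_ae_eq0 (M s p : R) (u : 'rV[R]_n -> R) :
  (0 < n)%N -> (forall x, Om x -> `|x| <= M) -> in_X0 s p Om u ->
  gagliardo_int s p u = 0%E -> iter_ae n (fun v => u (rowof n v) = 0).
Proof.
move=> n_gt0 OmM [u_meas out0 _] G0.
apply: iter_aeS (gagliardo_int_eq0_ae u_meas G0) => v Kv.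
(* Compare v with a point v' beyond both Omega and v, where u vanishes. *)
pose M' := Num.max M `|rowof n v|.
have OmM' x : Om x -> `|x| <= M'.
  by move/OmM/le_trans; apply; rewrite le_max lexx.
have [v' [[Kvv' far0] Mv']] :=
  iter_ae_exists_gt M' (iter_aeI Kv (far_ae_eq0 n_gt0 OmM' u_meas out0)).
pose i0 : 'I_n := Ordinal n_gt0.
have vv' : rowt (tup n v) != rowt (tup n v').
  rewrite !rowt_tup; apply/negP => /eqP /rowP /(_ i0) vv'.
  have := Mv' i0 n_gt0; apply/negP; rewrite -leNgt.
  have := mx_norm_ge_coef (rowof n v) i0; rewrite vv' mxE => /(le_trans (ler_norm _)).
  by move/le_trans; apply; rewrite le_max lexx orbT.
by have := gagliardo_kernel_eq0 Kvv' vv'; rewrite !rowt_tup => ->; apply: far0.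
Qed.

End VanishingOnOmega.

Definition nehari_bound (R : realFieldType) (p q theta alpha b A B : R) : R :=
  - ((q - p) * (p + alpha - 1) / (q * p * (1 - alpha))) * A
  - b * ((q - p * theta) * (p * theta + alpha - 1) / (q * p * theta * (1 - alpha))) * B.

Lemma J_lt_nehari_bound (R : realFieldType) (p q theta alpha b lambda A B C F : R) :
  1 < p -> 1 < theta -> 0 < alpha < 1 -> p * theta < q ->
  A + b * B - C - lambda * q * F = 0 ->
  0 < (p - 1) * A + b * (p * theta - 1) * B + alpha * C - lambda * q * (q - 1) * F ->
  p^-1 * A + b / (p * theta) * B - (1 - alpha)^-1 * C - lambda * F
    < nehari_bound p q theta alpha b A B.
Proof.
move=> p_gt1 theta_gt1 /andP[alpha_gt0 alpha_lt1] ptheta_lt_q phi1_eq0 phi2_gt0.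
have ptheta_gt_p : p < p * theta by rewrite ltr_pMr ?(lt_trans ltr01).
have lambdaF : lambda * F = (A + b * B - C) / q.
  rewrite (_ : A + b * B - C = lambda * q * F); last by lra.
  by field; rewrite gt_eqF //; lra.
rewrite -subr_gt0 (_ : _ - _ = ((q + alpha - 1) * C - (q - p) * A - b * (q - p * theta) * B)
    / (q * (1 - alpha))).
  apply: divr_gt0; last by apply: mulr_gt0; lra.
  rewrite (_ : _ - _ = ((p - 1) * A + b * (p * theta - 1) * B + alpha * C
     - lambda * q * (q - 1) * F) - (q - 1) * (A + b * B - C - lambda * q * F)); last by ring.
  by rewrite phi1_eq0 mulr0 subr0.
rewrite /nehari_bound lambdaF; field.
by rewrite !gt_eqF //; lra.
Qed.

Lemma nehari_bound_lt0 (R : realFieldType) (p q theta alpha b A B : R) :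
  1 < p -> 1 < theta -> 0 < alpha < 1 -> p * theta < q ->
  0 < b -> 0 <= A -> 0 < B -> nehari_bound p q theta alpha b A B < 0.
Proof.
move=> p_gt1 theta_gt1 /andP[alpha_gt0 alpha_lt1] ptheta_lt_q b_gt0 A_ge0 B_gt0.
have ptheta_gt_p : p < p * theta by rewrite ltr_pMr ?(lt_trans ltr01).
have cA : 0 <= (q - p) * (p + alpha - 1) / (q * p * (1 - alpha)).
  by rewrite divr_ge0 // !mulr_ge0 //; lra.
have cB : 0 < (q - p * theta) * (p * theta + alpha - 1) / (q * p * theta * (1 - alpha)).
  by rewrite divr_gt0 // !mulr_gt0 //; lra.
have := mulr_ge0 cA A_ge0; have := mulr_gt0 (mulr_gt0 b_gt0 cB) B_gt0.
rewrite /nehari_bound; lra.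
Qed.

Lemma nehari_plus_C_gt0 (R : realFieldType) (p q theta alpha b lambda A B C F : R) :
  1 < p -> 1 < theta -> 0 < alpha < 1 -> p * theta < q ->
  0 < b -> 0 <= A -> 0 <= B ->
  A + b * B - C - lambda * q * F = 0 ->
  0 < (p - 1) * A + b * (p * theta - 1) * B + alpha * C - lambda * q * (q - 1) * F ->
  0 < C.
Proof.
move=> p_gt1 theta_gt1 /andP[alpha_gt0 alpha_lt1] ptheta_lt_q b_gt0 A_ge0 B_ge0 phi1_eq0.
have ptheta_gt_p : p < p * theta by rewrite ltr_pMr ?(lt_trans ltr01).
rewrite (_ : _ - _ = (p - q) * A + b * (p * theta - q) * B + (alpha + q - 1) * C
    + (q - 1) * (A + b * B - C - lambda * q * F)); last by ring.
rewrite phi1_eq0 mulr0 addr0 => phi2_gt0.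
have : (p - q) * A <= 0 by rewrite mulr_le0_ge0 //; lra.
have : b * (p * theta - q) * B <= 0 by rewrite mulr_le0_ge0 // mulr_ge0_le0 //; lra.
have : 0 < alpha + q - 1 by lra.
move=> /pmulr_rgt0 <-; lra.
Qed.

Theorem corollary3p1 (R : realType) (n : nat) (s p : R) (Om : set 'rV[R]_n)
    (a b theta alpha : R) (c : 'rV[R]_n -> R) (lambda q : R)
    (f : 'rV[R]_n -> R -> R) :
  0 < s < 1 -> 1 < p -> p * s < n%:R ->
  bounded_smooth_domain Om ->
  0 < a -> 0 < b -> 1 < theta -> 0 < alpha < 1 ->
  measurable_Rn c -> (exists M : R, forall x, Om x -> `|c x| <= M) ->
  (forall x, Om x -> 0 <= c x) ->
  0 < lambda ->
  p * theta < q -> q <= n%:R * p / (n%:R - p * s) ->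
  homogeneous2 Om q f ->
  forall u : 'rV[R]_n -> R,
    Nplus s p Om a b theta alpha c lambda q f u ->
    J_lambda s p Om a b theta alpha c lambda f u
      <= - ((q - p) * (p + alpha - 1) / (q * p * (1 - alpha)))
           * (a * X0norm s p u `^ p + Lnorm_on Om p u `^ p)
         - b * ((q - p * theta) * (p * theta + alpha - 1)
                / (q * p * theta * (1 - alpha))) * X0norm s p u `^ (p * theta)
    /\ - ((q - p) * (p + alpha - 1) / (q * p * (1 - alpha)))
           * (a * X0norm s p u `^ p + Lnorm_on Om p u `^ p)
         - b * ((q - p * theta) * (p * theta + alpha - 1)
                / (q * p * theta * (1 - alpha))) * X0norm s p u `^ (p * theta)
       < 0.
Proof.
move=> /andP[s_gt0 _] p_gt1 ps_lt_n [_ _ _ [M OmM] _] a_gt0 b_gt0 theta_gt1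
  alpha01 _ _ _ _ ptheta_lt_q _ _ u [uX0 phi1_eq0 phi2_gt0].
have /andP[_ alpha_lt1] := alpha01.
have n_gt0 : (0 < n)%N.
  by rewrite lt0n; apply: contraTneq ps_lt_n => ->; rewrite -leNgt mulr_ge0 //; lra.
have A_ge0 : 0 <= Aterm s p Om a u by rewrite addr_ge0 ?mulr_ge0 ?powR_ge0 //; lra.
have B_gt0 : 0 < X0norm s p u `^ (p * theta).
  rewrite lt_def powR_ge0 andbT powR_eq0 negb_and; apply/orP; left; apply/eqP => X0.
  have C0 : Cterm Om alpha c u = 0.
    apply: Rint_on_ae_eq0; apply: iter_aeS (gagliardo_int_eq0_ae_eq0 n_gt0 OmM uX0
      (X0norm_eq0 uX0 X0)) => v ->.
    by rewrite /posp maxxx powR0 ?mulr0 //; lra.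
  have := nehari_plus_C_gt0 p_gt1 theta_gt1 alpha01 ptheta_lt_q
    b_gt0 A_ge0 (powR_ge0 _ _) phi1_eq0 phi2_gt0.
  by rewrite C0 ltxx.
split; last exact: nehari_bound_lt0.
exact/ltW/(J_lt_nehari_bound p_gt1 theta_gt1 alpha01 ptheta_lt_q phi1_eq0 phi2_gt0).
Qed.
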